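(* Let $\lambda_1\ge\lambda_2>0$ and $D=\mathrm{diag}(\lambda_1,\lambda_2)$. The critical points of $\widetilde W_{1,0}(\cdot;D)$ on $SO(2)$ are exactly $R^{(1)}=\mathbb I_2$, $R^{(2)}=-\mathbb I_2$, and, in addition when $\lambda_1+\lambda_2>2$, the two rotations $$R^{(3)}_\pm=\begin{pmatrix}\frac{2}{\lambda_1+\lambda_2} & \mp\sqrt{1-\big(\frac{2}{\lambda_1+\lambda_2}\big)^2}\\ \pm\sqrt{1-\big(\frac{2}{\lambda_1+\lambda_2}\big)^2} & \frac{2}{\lambda_1+\lambda_2}\end{pmatrix},$$ with values $\widetilde W_{1,0}(R^{(1)};D)=(\lambda_1-1)^2+(\lambda_2-1)^2$, $\widetilde W_{1,0}(R^{(2)};D)=(\lambda_1+1)^2+(\lambda_2+1)^2$, $\widetilde W_{1,0}(R^{(3)}_\pm;D)=\frac12(\lambda_1-\lambda_2)^2$. Moreover: (i) $R^{(2)}$ is the global maximum of $\widetilde W_{1,0}(\cdot;D)$; (ii) if $\lambda_1+\lambda_2\le2$, $R^{(1)}$ is the global minimum; (iii) if $\lambda_1+\lambda_2>2$, $R^{(3)}_\pm$ are the global minima.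
   Context: $\mathrm{sym}(Y)=\tfrac12(Y+Y^T)$, $\|Y\|^2=\mathrm{tr}(Y^TY)$ (Frobenius norm). For an invertible matrix $G$, $\widetilde W_{1,0}(R;G)=\|\mathrm{sym}(R^TG-\mathbb I_n)\|^2$ for $R\in SO(n)$. *)

From Stdlib Require Export Reals.
Open Scope R_scope.

Record M2 : Type := mkM2 { a11 : R; a12 : R; a21 : R; a22 : R }.

Definition mmul (A B : M2) : M2 :=
  mkM2 (a11 A * a11 B + a12 A * a21 B) (a11 A * a12 B + a12 A * a22 B)
       (a21 A * a11 B + a22 A * a21 B) (a21 A * a12 B + a22 A * a22 B).
Definition mtr (A : M2) : M2 := mkM2 (a11 A) (a21 A) (a12 A) (a22 A).
Definition madd (A B : M2) : M2 :=
  mkM2 (a11 A + a11 B) (a12 A + a12 B) (a21 A + a21 B) (a22 A + a22 B).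
Definition mscale (k : R) (A : M2) : M2 :=
  mkM2 (k * a11 A) (k * a12 A) (k * a21 A) (k * a22 A).
Definition mopp (A : M2) : M2 := mscale (-1) A.
Definition mid : M2 := mkM2 1 0 0 1.
Definition mdet (A : M2) : R := a11 A * a22 A - a12 A * a21 A.
Definition diag2 (x y : R) : M2 := mkM2 x 0 0 y.

Definition msym (Y : M2) : M2 := mscale (1/2) (madd Y (mtr Y)).
Definition frob2 (Y : M2) : R :=
  a11 Y ^ 2 + a12 Y ^ 2 + a21 Y ^ 2 + a22 Y ^ 2.

Definition inSO2 (Rm : M2) : Prop := mmul (mtr Rm) Rm = mid /\ mdet Rm = 1.

Definition W10 (Rm G : M2) : R :=
  frob2 (msym (madd (mmul (mtr Rm) G) (mopp mid))).

(* rotation by angle t: the exponential of t * [[0,-1],[1,0]] *)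
Definition rot (t : R) : M2 := mkM2 (cos t) (- sin t) (sin t) (cos t).

(* Critical point of f on the manifold SO(2): R in SO(2) and the derivative
   of f along the curve t |-> R rot(t) (which spans the tangent space
   T_R SO(2) = R so(2)) vanishes at t = 0. *)
Definition critical_SO2 (f : M2 -> R) (Rm : M2) : Prop :=
  inSO2 Rm /\ derivable_pt_lim (fun t => f (mmul Rm (rot t))) 0 0.

Definition R3p (l1 l2 : R) : M2 :=
  let c := 2 / (l1 + l2) in mkM2 c (- sqrt (1 - c ^ 2)) (sqrt (1 - c ^ 2)) c.
Definition R3m (l1 l2 : R) : M2 :=
  let c := 2 / (l1 + l2) in mkM2 c (sqrt (1 - c ^ 2)) (- sqrt (1 - c ^ 2)) c.

(* Every R in SO(2) is a rotation [[c, -s], [s, c]] with c^2 + s^2 = 1, and on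
   such a matrix the energy depends on c alone:
       W~_{1,0}(R; D) = ((s0 c - 2)^2 + (l1 - l2)^2) / 2,   s0 = l1 + l2.
   Moving along the curve t |-> R rot(t) turns (c, s) by the angle t, so the
   derivative at t = 0 is -s0 * s * (s0 c - 2); for s0 > 0 the critical points
   are therefore the points of the unit circle with s = 0 (that is R = I or
   R = -I) or s0 c = 2 (possible only when s0 > 2, giving R^(3)_+ and R^(3)_-).
   The extremal statements become elementary inequalities for the parabola
   c |-> (s0 c - 2)^2 on [-1, 1]. *)
From Stdlib Require Import Reals Lra Psatz.
From Coquelicot Require Import Coquelicot.
Open Scope R_scope.

Definition rmat (c s : R) : M2 := mkM2 c (- s) s c.

Definition reduced_W (l1 l2 c : R) : R := (((l1 + l2) * c - 2) ^ 2 + (l1 - l2) ^ 2) / 2.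

Lemma W10_rmat (l1 l2 c s : R) :
  W10 (rmat c s) (diag2 l1 l2) = (c * l1 - 1) ^ 2 + (c * l2 - 1) ^ 2 + s ^ 2 * (l1 - l2) ^ 2 / 2.
Proof. unfold W10, frob2, msym, madd, mmul, mtr, mopp, mscale, mid, diag2, rmat; cbn; field. Qed.

Lemma W10_rmat_unit (l1 l2 c s : R) :
  c ^ 2 + s ^ 2 = 1 -> W10 (rmat c s) (diag2 l1 l2) = reduced_W l1 l2 c.
Proof.
  intros Hcs; rewrite W10_rmat; unfold reduced_W.
  replace (s ^ 2) with (1 - c ^ 2) by lra; field.
Qed.

Lemma rmat_mul_rot (c s t : R) :
  mmul (rmat c s) (rot t) = rmat (c * cos t - s * sin t) (s * cos t + c * sin t).
Proof. unfold mmul, rmat, rot; cbn; f_equal; ring. Qed.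

Lemma W10_derivative_along_rot (l1 l2 c s : R) :
  derivable_pt_lim (fun t => W10 (mmul (rmat c s) (rot t)) (diag2 l1 l2)) 0
    (- (l1 + l2) * (s * ((l1 + l2) * c - 2))).
Proof.
  apply is_derive_Reals.
  apply (is_derive_ext (fun t =>
    ((c * cos t - s * sin t) * l1 - 1) ^ 2 + ((c * cos t - s * sin t) * l2 - 1) ^ 2
    + (s * cos t + c * sin t) ^ 2 * (l1 - l2) ^ 2 / 2)).
  { intros t; rewrite rmat_mul_rot, W10_rmat; reflexivity. }
  auto_derive; [easy|].
  rewrite cos_0, sin_0; change (RinvImpl.Rinv 2) with (/ 2); field.
Qed.

Lemma rmat_inSO2 (c s : R) : c ^ 2 + s ^ 2 = 1 -> inSO2 (rmat c s).
Proof. intros Hcs; unfold inSO2, mmul, mtr, mdet, mid, rmat; cbn; split; [f_equal|]; nra. Qed.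

Lemma inSO2_rmat (Rm : M2) : inSO2 Rm -> exists c s, Rm = rmat c s /\ c ^ 2 + s ^ 2 = 1.
Proof.
  destruct Rm as [a b c d]; unfold inSO2, mmul, mtr, mdet, mid; cbn.
  intros [Horth Hdet]; injection Horth as H11 H12 H21 H22.
  (* |col_1 - J col_2|^2 = 2 - 2 det = 0, where J is the rotation by pi/2 *)
  assert (Hsq : (d - a) ^ 2 + (b + c) ^ 2 = 0) by nra.
  assert (Hd : d = a) by (assert ((d - a) ^ 2 = 0) by nra; nra).
  assert (Hb : b = - c) by (assert ((b + c) ^ 2 = 0) by nra; nra).
  subst d b; exists a, c; split; [reflexivity | nra].
Qed.

Lemma W10_on_SO2 (l1 l2 : R) (Rm : M2) :
  inSO2 Rm -> exists c, -1 <= c <= 1 /\ W10 Rm (diag2 l1 l2) = reduced_W l1 l2 c.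
Proof.
  intros HR; destruct (inSO2_rmat Rm HR) as [c [s [-> Hcs]]].
  exists c; split; [nra | exact (W10_rmat_unit l1 l2 c s Hcs)].
Qed.

Lemma critical_rmat_iff (l1 l2 c s : R) :
  l1 + l2 <> 0 -> c ^ 2 + s ^ 2 = 1 ->
  critical_SO2 (fun X => W10 X (diag2 l1 l2)) (rmat c s) <-> s * ((l1 + l2) * c - 2) = 0.
Proof.
  intros Hs Hcs; split.
  - intros [_ Hderiv].
    pose proof (uniqueness_limite _ _ _ _ Hderiv (W10_derivative_along_rot l1 l2 c s)) as E.
    apply (Rmult_eq_reg_l (- (l1 + l2))); lra.
  - intros Hzero; split; [exact (rmat_inSO2 c s Hcs)|].
    pose proof (W10_derivative_along_rot l1 l2 c s) as Hderiv.
    rewrite Hzero, Rmult_0_r in Hderiv; exact Hderiv.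
Qed.

Lemma circle_sqrt (c : R) : c ^ 2 <= 1 -> c ^ 2 + sqrt (1 - c ^ 2) ^ 2 = 1.
Proof. intros Hc; rewrite <- (Rsqr_pow2 (sqrt _)), Rsqr_sqrt; lra. Qed.

Lemma circle_sqrt_opp (c : R) : c ^ 2 <= 1 -> c ^ 2 + (- sqrt (1 - c ^ 2)) ^ 2 = 1.
Proof.
  intros Hc; replace ((- sqrt (1 - c ^ 2)) ^ 2) with (sqrt (1 - c ^ 2) ^ 2) by ring.
  exact (circle_sqrt c Hc).
Qed.

Lemma inv_cos_bound (s0 : R) : s0 > 2 -> (2 / s0) ^ 2 <= 1.
Proof.
  intros Hs; assert (0 < 2 / s0 < 1).
  { split; [apply Rdiv_lt_0_compat; lra|].
    apply (Rmult_lt_reg_r s0); [lra|]; field_simplify; lra. }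
  nra.
Qed.

Lemma circle_critical_points (s0 c s : R) :
  s0 > 0 -> c ^ 2 + s ^ 2 = 1 -> s * (s0 * c - 2) = 0 ->
  (c = 1 /\ s = 0) \/ (c = -1 /\ s = 0) \/
  (s0 > 2 /\ c = 2 / s0 /\ (s = sqrt (1 - (2 / s0) ^ 2) \/ s = - sqrt (1 - (2 / s0) ^ 2))).
Proof.
  intros Hs Hcs Hzero.
  destruct (Req_dec s 0) as [-> | Hsin].
  - assert (Hc : (c - 1) * (c + 1) = 0) by nra.
    apply Rmult_integral in Hc as [Hc | Hc]; [left | right; left]; split; lra.
  - assert (Hcos : s0 * c = 2) by (apply Rmult_integral in Hzero as [|]; lra).
    (* s <> 0 forces |c| < 1, hence s0 = 2/c > 2 *)
    assert (Hlt : c ^ 2 < 1) by (pose proof (pow2_gt_0 s Hsin); lra).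
    assert (Hcpos : 0 < c) by nra.
    assert (Hbig : s0 > 2) by nra.
    assert (Hc : c = 2 / s0) by (field_simplify_eq; lra).
    assert (Hsq : 1 - (2 / s0) ^ 2 = s ^ 2) by (rewrite <- Hc; lra).
    right; right; split; [exact Hbig | split; [exact Hc|]]; rewrite Hsq.
    destruct (Rle_dec 0 s) as [Hpos | Hneg].
    + left; rewrite sqrt_pow2; [reflexivity | exact Hpos].
    + right; replace (s ^ 2) with ((- s) ^ 2) by ring; rewrite sqrt_pow2; lra.
Qed.

Lemma mid_rmat : mid = rmat 1 0.
Proof. unfold mid, rmat; f_equal; ring. Qed.

Lemma mopp_mid_rmat : mopp mid = rmat (-1) 0.
Proof. unfold mopp, mscale, mid, rmat; cbn; f_equal; ring. Qed.

Lemma R3p_rmat (l1 l2 : R) :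
  R3p l1 l2 = rmat (2 / (l1 + l2)) (sqrt (1 - (2 / (l1 + l2)) ^ 2)).
Proof. reflexivity. Qed.

Lemma R3m_rmat (l1 l2 : R) :
  R3m l1 l2 = rmat (2 / (l1 + l2)) (- sqrt (1 - (2 / (l1 + l2)) ^ 2)).
Proof. unfold R3m, rmat; cbn; rewrite Ropp_involutive; reflexivity. Qed.

Lemma critical_points_W10 (l1 l2 : R) (Rm : M2) :
  l1 + l2 > 0 ->
  critical_SO2 (fun X => W10 X (diag2 l1 l2)) Rm <->
  (Rm = mid \/ Rm = mopp mid \/ (l1 + l2 > 2 /\ (Rm = R3p l1 l2 \/ Rm = R3m l1 l2))).
Proof.
  intros Hs; rewrite mopp_mid_rmat, mid_rmat, R3p_rmat, R3m_rmat; split.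
  - intros Hcrit; destruct (inSO2_rmat Rm (proj1 Hcrit)) as [c [s [-> Hcs]]].
    apply critical_rmat_iff in Hcrit; [|lra | exact Hcs].
    destruct (circle_critical_points (l1 + l2) c s Hs Hcs Hcrit)
      as [[-> ->] | [[-> ->] | [Hbig [-> [-> | ->]]]]]; tauto.
  - (* I and -I are handled by linear arithmetic; R^(3)_+- lie on the line s0 c = 2 *)
    assert (Hvertex : (l1 + l2) * (2 / (l1 + l2)) - 2 = 0) by (field; lra).
    intros [-> | [-> | [Hbig [-> | ->]]]]; apply critical_rmat_iff; try lra.
    + apply circle_sqrt, inv_cos_bound, Hbig.
    + rewrite Hvertex; ring.
    + apply circle_sqrt_opp, inv_cos_bound, Hbig.
    + rewrite Hvertex; ring.
Qed.

Lemma reduced_W_max (l1 l2 c : R) :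
  l1 + l2 >= 0 -> -1 <= c <= 1 -> reduced_W l1 l2 c <= reduced_W l1 l2 (-1).
Proof.
  intros Hs Hc; unfold reduced_W.
  (* (s0 + 2)^2 - (s0 c - 2)^2 = (s0 (1 - c) + 4) * s0 (1 + c) >= 0 *)
  assert (0 <= ((l1 + l2) * (1 - c) + 4) * ((l1 + l2) * (1 + c)))
    by (apply Rmult_le_pos; nra).
  nra.
Qed.

Lemma reduced_W_min_small (l1 l2 c : R) :
  0 <= l1 + l2 <= 2 -> -1 <= c <= 1 -> reduced_W l1 l2 1 <= reduced_W l1 l2 c.
Proof.
  intros Hs Hc; unfold reduced_W.
  (* (s0 c - 2)^2 - (s0 - 2)^2 = s0 (1 - c) * (4 - s0 (1 + c)) >= 0 *)
  assert (0 <= ((l1 + l2) * (1 - c)) * (4 - (l1 + l2) * (1 + c)))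
    by (apply Rmult_le_pos; nra).
  nra.
Qed.

Lemma reduced_W_at_vertex (l1 l2 : R) :
  l1 + l2 <> 0 -> reduced_W l1 l2 (2 / (l1 + l2)) = 1 / 2 * (l1 - l2) ^ 2.
Proof. intros Hs; unfold reduced_W; field; exact Hs. Qed.

Lemma reduced_W_min_vertex (l1 l2 c : R) :
  l1 + l2 <> 0 -> reduced_W l1 l2 (2 / (l1 + l2)) <= reduced_W l1 l2 c.
Proof.
  intros Hs; rewrite reduced_W_at_vertex by exact Hs; unfold reduced_W.
  pose proof (pow2_ge_0 ((l1 + l2) * c - 2)); lra.
Qed.

Lemma W10_R3 (l1 l2 : R) :
  l1 + l2 > 2 ->
  W10 (R3p l1 l2) (diag2 l1 l2) = reduced_W l1 l2 (2 / (l1 + l2)) /\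
  W10 (R3m l1 l2) (diag2 l1 l2) = reduced_W l1 l2 (2 / (l1 + l2)).
Proof.
  intros Hbig; pose proof (inv_cos_bound (l1 + l2) Hbig) as Hc.
  rewrite R3p_rmat, R3m_rmat, !W10_rmat_unit;
    [split; reflexivity | apply circle_sqrt_opp | apply circle_sqrt]; exact Hc.
Qed.

Theorem mainTheorem6 (l1 l2 : R) (hl : l1 >= l2) (hl2 : l2 > 0) :
  let D := diag2 l1 l2 in
  (forall Rm : M2,
     critical_SO2 (fun X => W10 X D) Rm <->
     (Rm = mid \/ Rm = mopp mid \/
      (l1 + l2 > 2 /\ (Rm = R3p l1 l2 \/ Rm = R3m l1 l2)))) /\
  W10 mid D = (l1 - 1) ^ 2 + (l2 - 1) ^ 2 /\
  W10 (mopp mid) D = (l1 + 1) ^ 2 + (l2 + 1) ^ 2 /\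
  (l1 + l2 > 2 ->
     W10 (R3p l1 l2) D = 1 / 2 * (l1 - l2) ^ 2 /\
     W10 (R3m l1 l2) D = 1 / 2 * (l1 - l2) ^ 2) /\
  (forall Rm : M2, inSO2 Rm -> W10 Rm D <= W10 (mopp mid) D) /\
  (l1 + l2 <= 2 -> forall Rm : M2, inSO2 Rm -> W10 mid D <= W10 Rm D) /\
  (l1 + l2 > 2 -> forall Rm : M2, inSO2 Rm ->
     W10 (R3p l1 l2) D <= W10 Rm D /\ W10 (R3m l1 l2) D <= W10 Rm D).
Proof.
  intros D; subst D.
  assert (Hs : l1 + l2 > 0) by lra.
  assert (Wmid : W10 mid (diag2 l1 l2) = reduced_W l1 l2 1)
    by (rewrite mid_rmat; apply W10_rmat_unit; ring).
  assert (Wopp : W10 (mopp mid) (diag2 l1 l2) = reduced_W l1 l2 (-1))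
    by (rewrite mopp_mid_rmat; apply W10_rmat_unit; ring).
  split; [intros Rm; exact (critical_points_W10 l1 l2 Rm Hs)|].
  split; [rewrite Wmid; unfold reduced_W; field|].
  split; [rewrite Wopp; unfold reduced_W; field|].
  split; [intros Hbig; destruct (W10_R3 l1 l2 Hbig) as [-> ->];
          rewrite reduced_W_at_vertex by lra; split; reflexivity|].
  split; [|split].
  - intros Rm HR; destruct (W10_on_SO2 l1 l2 Rm HR) as [c [Hc ->]].
    rewrite Wopp; apply reduced_W_max; lra.
  - intros Hsmall Rm HR; destruct (W10_on_SO2 l1 l2 Rm HR) as [c [Hc ->]].
    rewrite Wmid; apply reduced_W_min_small; lra.
  - intros Hbig Rm HR; destruct (W10_on_SO2 l1 l2 Rm HR) as [c [Hc ->]].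
    destruct (W10_R3 l1 l2 Hbig) as [-> ->].
    split; apply reduced_W_min_vertex; lra.
Qed.
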